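(* Let $d=2$ or $d$ an odd prime, let $t\ge1$, let $V$ be a unitary on $(\mathbb{C}^d)^{\otimes t}$ in the third level of the Clifford hierarchy, and let $|\phi\rangle$ be a pure stabilizer state on $(\mathbb{C}^d)^{\otimes t}$. Then $|\psi\rangle=V|\phi\rangle$ satisfies $D_{\min,\mathbb{F}_{\rm STAB}}(\psi^{\otimes n})=D_{\max,\mathbb{F}_{\rm STAB}}(\psi^{\otimes n})$ for every integer $n\ge1$.
   Context: $\log$ base 2. On $\mathbb{C}^d$, $X|j\rangle=|j+1\bmod d\rangle$, $Z|j\rangle=e^{2\pi ij/d}|j\rangle$; the multi-qudit (generalized) Pauli group is generated by tensor products of powers of $X$ and $Z$ (with phases). The Clifford group consists of unitaries that map the Pauli group to itself under conjugation (up to phases). The third level of the Clifford hierarchy consists of unitaries $V$ with $VPV^\dagger$ Clifford for every Pauli operator $P$. Pure stabilizer states are states $C|0\rangle^{\otimes m}$ with $C$ Clifford, and $\mathbb{F}_{\rm STAB}$ is the convex hull of pure stabilizer states on the relevant number of qudits (here $tn$). $D_{\min,\mathbb{F}}(\rho)=\inf_{\sigma\in\mathbb{F}}(-\log\mathrm{Tr}[\Pi_\rho\sigma])$; $D_{\max,\mathbb{F}}(\rho)=\inf\{\log(1+s):\frac{\rho+s\tau}{1+s}\in\mathbb{F},\tau\text{ a state}\}$. *)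

From mathcomp Require Import all_boot all_order all_algebra all_reals all_analysis.
From mathcomp Require Import complex.
Set Implicit Arguments. Unset Strict Implicit. Unset Printing Implicit Defensive.
Import Order.TTheory GRing.Theory Num.Theory.
Local Open Scope ring_scope.
Local Open Scope classical_set_scope.

Definition adjm (R : realType) (m n : nat) (A : 'M[R[i]]_(m, n)) : 'M[R[i]]_(n, m) :=
  (map_mx Num.conj A)^T.

Definition omega (R : realType) (d : nat) : R[i] :=
  Complex (cos (2 * pi / d%:R)) (sin (2 * pi / d%:R)).

(* k-th base-d digit of an index: (C^d)^{⊗m} has basis indexed by
   i < d^m, i = sum_k i_k d^k; qudit k carries the digit i_k. *)
Definition digit (d i k : nat) : nat := ((i %/ d ^ k) %% d)%N.

(* The m-qudit Pauli string  X^{a_0} Z^{b_0} ⊗ ... ⊗ X^{a_{m-1}} Z^{b_{m-1}},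
   written out entrywise: (X^a Z^b)_{x,y} = [x = y + a mod d] omega^{b y}. *)
Definition pauli_string (R : realType) (d m : nat) (a b : 'I_m -> nat)
  : 'M[R[i]]_(d ^ m) :=
  \matrix_(x, y) \prod_(k < m)
     ((digit d x k == (digit d y k + a k) %% d)%N%:R * omega R d ^+ (b k * digit d y k)%N).

Definition is_pauli (R : realType) (d m : nat) (P : 'M[R[i]]_(d ^ m)) : Prop :=
  exists (lam : R[i]) (a b : 'I_m -> nat),
    `|lam| = 1 /\ P = lam *: pauli_string R d a b.
Arguments is_pauli : clear implicits.

Definition unitary (R : realType) (N : nat) (U : 'M[R[i]]_N) : Prop :=
  U *m adjm U = 1%:M.

Definition is_clifford (R : realType) (d m : nat) (U : 'M[R[i]]_(d ^ m)) : Prop :=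
  unitary U /\ forall P, is_pauli R d m P -> is_pauli R d m (U *m P *m adjm U).
Arguments is_clifford : clear implicits.

Definition third_level (R : realType) (d m : nat) (V : 'M[R[i]]_(d ^ m)) : Prop :=
  unitary V /\ forall P, is_pauli R d m P -> is_clifford R d m (V *m P *m adjm V).
Arguments third_level : clear implicits.

Definition ket0 (R : realType) (d m : nat) : 'cV[R[i]]_(d ^ m) :=
  \col_x ((x : nat) == 0%N)%:R.

Definition is_stab_state (R : realType) (d m : nat) (phi : 'cV[R[i]]_(d ^ m)) : Prop :=
  exists C, is_clifford R d m C /\ phi = C *m ket0 R d m.
Arguments is_stab_state : clear implicits.

Definition proj (R : realType) (N : nat) (v : 'cV[R[i]]_N) : 'M[R[i]]_N :=
  v *m adjm v.

Definition realC (R : realType) (x : R) : R[i] := Complex x 0.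

Definition in_FSTAB (R : realType) (d m : nat) (sigma : 'M[R[i]]_(d ^ m)) : Prop :=
  exists (k : nat) (w : 'I_k -> R) (phi : 'I_k -> 'cV[R[i]]_(d ^ m)),
    (forall l, 0 <= w l) /\ \sum_l w l = 1 /\
    (forall l, is_stab_state R d m (phi l)) /\
    sigma = \sum_l realC (w l) *: proj (phi l).
Arguments in_FSTAB : clear implicits.

Definition psd (R : realType) (N : nat) (A : 'M[R[i]]_N) : Prop :=
  A = adjm A /\ forall x : 'cV[R[i]]_N, 0 <= (adjm x *m A *m x) 0 0.

Definition is_state (R : realType) (N : nat) (tau : 'M[R[i]]_N) : Prop :=
  psd tau /\ \tr tau = 1.

(* P is the orthogonal projector onto the support (range) of rho:
   an orthogonal projector fixing the range of rho and of the same rank. *)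
Definition supp_proj (R : realType) (N : nat) (rho P : 'M[R[i]]_N) : Prop :=
  P = adjm P /\ P *m P = P /\ P *m rho = rho /\ \rank P = \rank rho.

(* -log_2 of a (real, nonnegative) trace value, with -log 0 = +oo *)
Definition neglog2 (R : realType) (z : R[i]) : \bar R :=
  if 0 < complex.Re z then (- (ln (complex.Re z) / ln 2))%:E else +oo%E.

Definition Dmin_STAB (R : realType) (d m : nat) (rho : 'M[R[i]]_(d ^ m)) : \bar R :=
  ereal_inf (fun y : \bar R => exists P sigma, supp_proj rho P /\ in_FSTAB R d m sigma /\
                                     y = neglog2 (\tr (P *m sigma))).
Arguments Dmin_STAB : clear implicits.

Definition Dmax_STAB (R : realType) (d m : nat) (rho : 'M[R[i]]_(d ^ m)) : \bar R :=
  ereal_inf (fun y : \bar R => exists (s : R) (tau : 'M[R[i]]_(d ^ m)),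
     0 <= s /\ is_state tau /\
     in_FSTAB R d m ((realC (1 + s))^-1 *: (rho + realC s *: tau)) /\
     y = (ln (1 + s) / ln 2)%:E).
Arguments Dmax_STAB : clear implicits.

(* entry k of a column vector (0 out of range) *)
Definition vget (R : realType) (N : nat) (v : 'cV[R[i]]_N) (k : nat) : R[i] :=
  if @insub _ (fun x => x < N)%N 'I_N k is Some o then v o 0 else 0.

(* psi^{⊗n} for psi on t qudits, a vector on t*n qudits: block l (qudits
   l*t, ..., l*t+t-1) is the l-th base-d^t digit of the index. *)
Definition tpow_vec (R : realType) (d t n : nat) (psi : 'cV[R[i]]_(d ^ t))
  : 'cV[R[i]]_(d ^ (t * n)) :=
  \col_x \prod_(l < n) vget psi ((x %/ (d ^ t) ^ l) %% d ^ t)%N.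
Arguments tpow_vec : clear implicits.

From mathcomp Require Import all_boot all_order all_algebra all_reals all_analysis.
From mathcomp Require Import complex.
From mathcomp Require Import ring lra.
Import Order.TTheory GRing.Theory Num.Theory.
Set Implicit Arguments. Unset Strict Implicit. Unset Printing Implicit Defensive.
Local Open Scope ring_scope.
Local Open Scope complex_scope.

(* Write phi = C|0> with C Clifford, so that psi^{\otimes n} = W|0> with W = (V C)^{\otimes n}.
   For every diagonal Pauli Z_beta, C Z_beta C^* is a Pauli and V is in the third level, so
   W Z_beta W^* is Clifford.  Averaging sigma over conjugation by these Cliffords preserves
   F_STAB and dephases sigma in the orthonormal basis W|x>; for sigma in F_STAB the result is
   g |psi><psi| + (1 - g) tau with g = <psi|sigma|psi> and tau a state, which witnesses
   D_max(psi) <= -log g.  Hence D_max <= D_min; the converse holds for every pure state, since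
   a feasible point of D_max is a stabilizer mixture whose overlap with psi is >= 1/(1+s). *)

Section Adjoint.
Variable R : realType.
Local Notation C := R[i].

Lemma adjmM m n p (A : 'M[C]_(m, n)) (B : 'M[C]_(n, p)) :
  adjm (A *m B) = adjm B *m adjm A.
Proof. by rewrite /adjm map_mxM trmx_mul. Qed.

Lemma adjmK m n (A : 'M[C]_(m, n)) : adjm (adjm A) = A.
Proof. by apply/matrixP => i j; rewrite !mxE conjCK. Qed.

Lemma adjmZ m n (a : C) (A : 'M[C]_(m, n)) : adjm (a *: A) = a^* *: adjm A.
Proof. by apply/matrixP => i j; rewrite !mxE rmorphM. Qed.

Lemma adjm_sum m n I (r : seq I) (P : pred I) (F : I -> 'M[C]_(m, n)) :
  adjm (\sum_(i <- r | P i) F i) = \sum_(i <- r | P i) adjm (F i).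
Proof.
apply/matrixP => i j; rewrite !mxE !summxE rmorph_sum.
by apply: eq_bigr => k _; rewrite !mxE.
Qed.

Lemma adjm_delta m p (i : 'I_m) (j : 'I_p) :
  adjm (delta_mx i j : 'M[C]_(m, p)) = delta_mx j i.
Proof.
by apply/matrixP => a b; rewrite !mxE andbC; case: (_ && _); rewrite ?rmorph0 ?rmorph1.
Qed.

Lemma unitaryV N (U : 'M[C]_N) : unitary U -> adjm U *m U = 1%:M.
Proof. exact: mulmx1C. Qed.

Lemma unitaryM N (U W : 'M[C]_N) : unitary U -> unitary W -> unitary (U *m W).
Proof. by rewrite /unitary => hU hW; rewrite adjmM mulmxA -(mulmxA U) hW mulmx1. Qed.

Lemma unitary_unit_vec N (U : 'M[C]_N) (v : 'cV[C]_N) :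
  unitary U -> adjm v *m v = 1%:M -> adjm (U *m v) *m (U *m v) = 1%:M.
Proof. by move=> hU hv; rewrite adjmM mulmxA -(mulmxA (adjm v)) unitaryV // mulmx1. Qed.

Lemma delta_unit_vec N (x : 'I_N) : adjm (delta_mx x 0 : 'cV[C]_N) *m delta_mx x 0 = 1%:M.
Proof. by rewrite adjm_delta mul_delta_mx; apply/matrixP => i j; rewrite !ord1 !mxE. Qed.

Lemma proj_conj N (W : 'M[C]_N) v : W *m proj v *m adjm W = proj (W *m v).
Proof. by rewrite /proj adjmM !mulmxA. Qed.

Lemma adjm_proj N (v : 'cV[C]_N) : adjm (proj v) = proj v.
Proof. by rewrite /proj adjmM adjmK. Qed.

Lemma mxtrace_projMl N (v : 'cV[C]_N) (X : 'M[C]_N) :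
  \tr (proj v *m X) = (adjm v *m X *m v) 0 0.
Proof. by rewrite /proj -mulmxA mxtrace_mulC trace_mx11. Qed.

Lemma mxtrace_proj N (v : 'cV[C]_N) : adjm v *m v = 1%:M -> \tr (proj v) = 1.
Proof. by move=> hv; rewrite -[proj v]mulmx1 mxtrace_projMl mulmx1 hv mxE. Qed.

End Adjoint.

Section StabilizerCone.
Variables (R : realType) (d : nat).
Hypothesis d_gt0 : (0 < d)%N.
Local Notation C := R[i].

Lemma cliffordM m (U W : 'M[C]_(d ^ m)) :
  is_clifford R d m U -> is_clifford R d m W -> is_clifford R d m (U *m W).
Proof.
move=> [uU hU] [uW hW]; split; first exact: unitaryM.
move=> P hP; have -> : U *m W *m P *m adjm (U *m W) = U *m (W *m P *m adjm W) *m adjm U.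
  by rewrite adjmM !mulmxA.
exact/hU/hW.
Qed.

Lemma stab_state_clifford m (W : 'M[C]_(d ^ m)) phi :
  is_clifford R d m W -> is_stab_state R d m phi -> is_stab_state R d m (W *m phi).
Proof.
by move=> hW [U [hU ->]]; exists (W *m U); split; [exact: cliffordM | rewrite mulmxA].
Qed.

Lemma ket0_delta m (hD : (0 < d ^ m)%N) : ket0 R d m = delta_mx (Ordinal hD) 0.
Proof.
apply/matrixP => i j; rewrite !ord1 !mxE /= andbT.
by congr (_%:R); apply/eqP/eqP => [h|->//]; apply/val_inj.
Qed.

Lemma mulmx_ket0 m (A : 'M[C]_(d ^ m)) x (hD : (0 < d ^ m)%N) :
  (A *m ket0 R d m) x 0 = A x (Ordinal hD).
Proof. by rewrite (ket0_delta hD) -colE mxE. Qed.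

Lemma stab_state_unit m phi : is_stab_state R d m phi -> adjm phi *m phi = 1%:M.
Proof.
have hD : (0 < d ^ m)%N by rewrite expn_gt0 d_gt0.
by move=> [U [[hU _] ->]]; rewrite ket0_delta; exact: unitary_unit_vec (delta_unit_vec _ _).
Qed.

Definition stab_cone m (sigma : 'M[C]_(d ^ m)) : Prop :=
  exists (k : nat) (w : 'I_k -> R) (phi : 'I_k -> 'cV[C]_(d ^ m)),
    [/\ forall l, 0 <= w l, forall l, is_stab_state R d m (phi l) &
        sigma = \sum_l realC (w l) *: proj (phi l)].

Lemma realCE (x : R) : realC x = x%:C.
Proof. by []. Qed.

Lemma realC_sum I (r : seq I) (P : pred I) (F : I -> R) :
  \sum_(i <- r | P i) realC (F i) = realC (\sum_(i <- r | P i) F i).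
Proof. by rewrite realCE -(rmorph_sum (real_complex R)). Qed.

Lemma stab_cone0 m : stab_cone (0 : 'M[C]_(d ^ m)).
Proof. by exists 0%N, (fun _ => 0), (fun _ => 0); split; [case | case | rewrite big_ord0]. Qed.

Lemma stab_coneD m (s1 s2 : 'M[C]_(d ^ m)) : stab_cone s1 -> stab_cone s2 -> stab_cone (s1 + s2).
Proof.
move=> [k1 [w1 [p1 [hw1 hp1 ->]]]] [k2 [w2 [p2 [hw2 hp2 ->]]]].
exists (k1 + k2)%N, (fun l => match split l with inl a => w1 a | inr b => w2 b end),
  (fun l => match split l with inl a => p1 a | inr b => p2 b end).
split; [by move=> l; case: split.. |].
rewrite big_split_ord /=; congr (_ + _); apply: eq_bigr => i _.
  by rewrite -[lshift _ _]/(unsplit (inl i)) unsplitK.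
by rewrite -[rshift _ _]/(unsplit (inr i)) unsplitK.
Qed.

Lemma stab_coneZ m (c : R) (s : 'M[C]_(d ^ m)) :
  0 <= c -> stab_cone s -> stab_cone (realC c *: s).
Proof.
move=> hc [k [w [p [hw hp ->]]]]; exists k, (fun l => c * w l), p.
split=> [l||]; first exact: mulr_ge0; first by [].
by rewrite scaler_sumr; apply: eq_bigr => i _; rewrite scalerA !realCE -rmorphM.
Qed.

Lemma stab_cone_sum m I (r : seq I) (F : I -> 'M[C]_(d ^ m)) :
  (forall i, stab_cone (F i)) -> stab_cone (\sum_(i <- r) F i).
Proof. by move=> hF; elim/big_rec: _ => [|i s _]; [exact: stab_cone0 | exact: stab_coneD]. Qed.

Lemma stab_cone_conj m (W : 'M[C]_(d ^ m)) s :
  is_clifford R d m W -> stab_cone s -> stab_cone (W *m s *m adjm W).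
Proof.
move=> hW [k [w [p [hw hp ->]]]]; exists k, w, (fun l => W *m p l).
split=> // [l|]; first exact: stab_state_clifford.
rewrite mulmx_sumr mulmx_suml; apply: eq_bigr => i _.
by rewrite -scalemxAr -scalemxAl proj_conj.
Qed.

Lemma mxtrace_stab_comb k m (w : 'I_k -> R) (phi : 'I_k -> 'cV[C]_(d ^ m)) :
  (forall l, is_stab_state R d m (phi l)) ->
  \tr (\sum_l realC (w l) *: proj (phi l)) = realC (\sum_l w l).
Proof.
move=> hphi; rewrite raddf_sum /= -realC_sum; apply: eq_bigr => l _.
by rewrite mxtraceZ mxtrace_proj ?mulr1 // stab_state_unit.
Qed.

Lemma FSTAB_cone m (s : 'M[C]_(d ^ m)) : in_FSTAB R d m s -> stab_cone s.
Proof. by move=> [k [w [p [hw [_ [hp ->]]]]]]; exists k, w, p. Qed.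

Lemma mxtrace_FSTAB m (s : 'M[C]_(d ^ m)) : in_FSTAB R d m s -> \tr s = 1.
Proof. by move=> [k [w [p [_ [hw1 [hp ->]]]]]]; rewrite mxtrace_stab_comb // hw1. Qed.

Lemma stab_cone_FSTAB m (s : 'M[C]_(d ^ m)) :
  stab_cone s -> \tr s = 1 -> in_FSTAB R d m s.
Proof.
move=> [k [w [p [hw hp ->]]]]; rewrite mxtrace_stab_comb // => /(congr1 (@complex.Re R)).
by exists k, w, p.
Qed.

End StabilizerCone.

Lemma digit_lt B x k : (0 < B)%N -> (digit B x k < B)%N.
Proof. exact: ltn_pmod. Qed.

Lemma modn_mul_digit a b y : (0 < a)%N ->
  (y %% (b * a) = y %% a + a * ((y %/ a) %% b))%N.
Proof.
move=> a_gt0; rewrite modn_divl; set z := (y %% (b * a))%N.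
have -> : (y %% a = z %% a)%N by rewrite /z modn_dvdm // dvdn_mull.
by rewrite {1}(divn_eq z a) addnC mulnC.
Qed.

Lemma digits_inj B m x y : (0 < B)%N -> (x < B ^ m)%N -> (y < B ^ m)%N ->
  (forall l, (l < m)%N -> digit B x l = digit B y l) -> x = y.
Proof.
move=> B_gt0 lt_x lt_y hxy; rewrite -(modn_small lt_x) -(modn_small lt_y).
elim: m {lt_x lt_y} hxy => [|m IH] hxy; first by rewrite expn0 !modn1.
have B_m_gt0 : (0 < B ^ m)%N by rewrite expn_gt0 B_gt0.
rewrite expnS !modn_mul_digit // IH => [|l lt_lm]; last exact: hxy (ltnW lt_lm).
by rewrite [(x %/ _ %% _)%N]hxy.
Qed.

Section Tensor.
Variables (R : realType) (d t : nat).
Hypothesis d_gt0 : (0 < d)%N.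
Local Notation C := R[i].
Local Notation N := (d ^ t)%N.

Lemma expd_gt0 m : (0 < d ^ m)%N.
Proof. by rewrite expn_gt0 d_gt0. Qed.

Definition block (x l : nat) : 'I_N := Ordinal (digit_lt x l (expd_gt0 t)).

Lemma digit_block x l j : (j < t)%N -> digit d x (l * t + j) = digit d (block x l) j.
Proof.
move=> lt_jt; rewrite /digit /=.
rewrite expnD (mulnC l t) expnM divnMA; set X := (x %/ N ^ l)%N.
by rewrite (modn_divl X) (modn_divl (X %% N)%N) modn_dvdm // -expnS dvdn_exp2l.
Qed.

Lemma block_inj n (x y : 'I_(d ^ (t * n))) :
  (forall l : 'I_n, block x l = block y l) -> x = y.
Proof.
move=> hxy; apply/val_inj/(@digits_inj N n); rewrite -?expnM ?expd_gt0 ?ltn_ord // => l lt_ln.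
by have /(congr1 val) := hxy (Ordinal lt_ln).
Qed.

(* [tensor n A] is A 0 \otimes ... \otimes A (n - 1), the factor [A l] acting on the
   [l]-th block of [t] qudits, with the block convention of [tpow_vec]. *)
Definition tensor n (A : nat -> 'M[C]_N) : 'M[C]_(d ^ (t * n)) :=
  \matrix_(x, y) \prod_(l < n) A l (block x l) (block y l).

Definition blocks n (x : 'I_(d ^ (t * n))) : {ffun 'I_n -> 'I_N} :=
  [ffun l : 'I_n => block x l].

Lemma blocks_bij n : bijective (@blocks n).
Proof.
apply: inj_card_bij; last by rewrite card_ffun !card_ord expnM.
by move=> x y /ffunP hxy; apply: block_inj => l; have := hxy l; rewrite !ffunE.
Qed.

Lemma eq_tensor n (A B : nat -> 'M[C]_N) :
  (forall l, (l < n)%N -> A l = B l) -> tensor n A = tensor n B.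
Proof.
by move=> hAB; apply/matrixP => x y; rewrite !mxE; apply: eq_bigr => l _; rewrite hAB.
Qed.

Lemma tensor_mul n (A B : nat -> 'M[C]_N) :
  tensor n A *m tensor n B = tensor n (fun l => A l *m B l).
Proof.
apply/matrixP => x z; rewrite !mxE.
under [RHS]eq_bigr => l _ do rewrite mxE.
rewrite bigA_distr_bigA /= (reindex (@blocks n)) /=; last exact/onW_bij/blocks_bij.
by apply: eq_bigr => y _; rewrite !mxE -big_split; apply: eq_bigr => l _; rewrite ffunE.
Qed.

Lemma adjm_tensor n (A : nat -> 'M[C]_N) :
  adjm (tensor n A) = tensor n (fun l => adjm (A l)).
Proof.
by apply/matrixP => x y; rewrite !mxE rmorph_prod; apply: eq_bigr => l _; rewrite !mxE.
Qed.

Lemma tensor1 n : tensor n (fun _ => 1%:M) = 1%:M.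
Proof.
apply/matrixP => x y; rewrite !mxE; under eq_bigr => l _ do rewrite mxE.
have [<-|neq_xy] := eqVneq x y; first by rewrite big1 // => l _; rewrite eqxx.
have [l neq_l] : exists l : 'I_n, block x l != block y l.
  apply/existsP; apply: contraT; rewrite negb_exists => /forallP heq.
  by case/eqP: neq_xy; apply: block_inj => l; apply/eqP/negPn/heq.
by rewrite (bigD1 l) //= (negbTE neq_l) mul0r.
Qed.

Lemma tensorZ n (c : nat -> C) (A : nat -> 'M[C]_N) :
  tensor n (fun l => c l *: A l) = (\prod_(l < n) c l) *: tensor n A.
Proof. by apply/matrixP => x y; rewrite !mxE -big_split; apply: eq_bigr => l _; rewrite mxE. Qed.

Lemma tensor_unitary n (A : nat -> 'M[C]_N) :
  (forall l, unitary (A l)) -> unitary (tensor n A).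
Proof.
move=> hA; rewrite /unitary adjm_tensor tensor_mul -(tensor1 n).
by apply: eq_tensor => l _; exact: hA.
Qed.

End Tensor.

Lemma big_ord_blocks (T : Type) (idx : T) (op : Monoid.law idx) t n (G : nat -> T) :
  \big[op/idx]_(k < t * n) G k = \big[op/idx]_(l < n) \big[op/idx]_(j < t) G (l * t + j)%N.
Proof.
rewrite -(big_mkord xpredT G); elim: n => [|n IH]; first by rewrite muln0 big_geq // big_ord0.
rewrite big_ord_recr /= -IH mulnSr (@big_cat_nat _ _ _ (t * n)) ?leq_addr //=.
congr (op _ _); rewrite -{1}[(t * n)%N]add0n big_addn addKn big_mkord.
by apply: eq_bigr => j _; rewrite addnC mulnC.
Qed.

Definition ext0 m (a : 'I_m -> nat) (k : nat) : nat :=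
  if insub k is Some o then a o else 0%N.

Lemma ext0E m (a : 'I_m -> nat) (k : 'I_m) : ext0 a k = a k.
Proof. by rewrite /ext0 valK. Qed.

Section PauliTensor.
Variables (R : realType) (d t : nat).
Hypotheses (d_gt0 : (0 < d)%N) (t_gt0 : (0 < t)%N).
Local Notation C := R[i].

Lemma eq_pauli_string m (a a' b b' : 'I_m -> nat) :
  a =1 a' -> b =1 b' -> pauli_string R d a b = pauli_string R d a' b'.
Proof.
by move=> ha hb; apply/matrixP => x y; rewrite !mxE; apply: eq_bigr => k _; rewrite ha hb.
Qed.

Lemma is_pauliZ m (mu : C) P : `|mu| = 1 -> is_pauli R d m P -> is_pauli R d m (mu *: P).
Proof.
move=> hmu [lam [a [b [hlam ->]]]]; exists (mu * lam), a, b.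
by rewrite normrM hmu hlam mulr1 scalerA.
Qed.

Definition unblock (a : nat -> 'I_t -> nat) (k : nat) : nat :=
  a (k %/ t)%N (Ordinal (ltn_pmod k t_gt0)).

Lemma unblock_block (a : nat -> 'I_t -> nat) l (j : 'I_t) : unblock a (l * t + j) = a l j.
Proof.
rewrite /unblock divnMDl // divn_small // addn0; congr (a l _); apply: val_inj => /=.
by rewrite modnMDl modn_small.
Qed.

Lemma tensor_pauli_string n (a b : nat -> 'I_t -> nat) :
  tensor d_gt0 n (fun l => pauli_string R d (a l) (b l)) =
  pauli_string R d (fun k : 'I_(t * n) => unblock a k) (fun k => unblock b k).
Proof.
apply/matrixP => x y; rewrite !mxE.
rewrite (big_ord_blocks _ _ _ (fun k => (digit d x k == (digit d y k + unblock a k) %% d)%N%:R *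
                                        omega R d ^+ (unblock b k * digit d y k))).
apply: eq_bigr => l _; rewrite mxE; apply: eq_bigr => j _.
by rewrite !unblock_block !digit_block.
Qed.

Lemma pauli_string_tensor n (a b : 'I_(t * n) -> nat) :
  pauli_string R d a b =
  tensor d_gt0 n (fun l => pauli_string R d (fun j : 'I_t => ext0 a (l * t + j))
                                            (fun j : 'I_t => ext0 b (l * t + j))).
Proof.
by rewrite tensor_pauli_string; apply: eq_pauli_string => k; rewrite /unblock /= -divn_eq ext0E.
Qed.

Lemma is_pauli_tensor n (A : nat -> 'M[C]_(d ^ t)) :
  (forall l, is_pauli R d t (A l)) -> is_pauli R d (t * n) (tensor d_gt0 n A).
Proof.
move=> hA.
have hA' l : exists p : C * (('I_t -> nat) * ('I_t -> nat)),
    `|p.1| = 1 /\ A l = p.1 *: pauli_string R d p.2.1 p.2.2.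
  by have [lam [a [b [hlam ->]]]] := hA l; exists (lam, (a, b)).
have [f hf] := boolp.choice hA'.
have -> : tensor d_gt0 n A =
          tensor d_gt0 n (fun l => (f l).1 *: pauli_string R d (f l).2.1 (f l).2.2).
  by apply: eq_tensor => l _; case: (hf l).
rewrite tensorZ tensor_pauli_string; exists (\prod_(l < n) (f l).1).
exists (fun k => unblock (fun l => (f l).2.1) k), (fun k => unblock (fun l => (f l).2.2) k).
by split=> //; rewrite normr_prod big1 // => l _; case: (hf l).
Qed.

Lemma tensor_clifford n (A : nat -> 'M[C]_(d ^ t)) :
  (forall l, is_clifford R d t (A l)) -> is_clifford R d (t * n) (tensor d_gt0 n A).
Proof.
move=> hA; split=> [|_ [lam [a [b [hlam ->]]]]]; first by apply: tensor_unitary => l; case: (hA l).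
rewrite pauli_string_tensor -scalemxAr -scalemxAl adjm_tensor !tensor_mul.
apply: is_pauliZ hlam _; apply: is_pauli_tensor => l; apply: (hA l).2.
by exists 1, (fun j : 'I_t => ext0 a (l * t + j)), (fun j : 'I_t => ext0 b (l * t + j));
  rewrite normr1 scale1r.
Qed.

End PauliTensor.

Section RootOfUnity.
Variables (R : realType) (d : nat).
Hypothesis d_gt1 : (1 < d)%N.
Local Notation w := (omega R d).

Lemma omegaX k : w ^+ k = Complex (cos (k%:R * (2 * pi / d%:R))) (sin (k%:R * (2 * pi / d%:R))).
Proof.
elim: k => [|k IH]; first by rewrite expr0 mul0r cos0 sin0.
rewrite exprSr IH /omega; set th := 2 * pi / d%:R.
apply/eqP; rewrite eq_complex /= -[k.+1]addn1 natrD mulrDl mul1r cosD sinD.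
by rewrite eqxx addrC eqxx.
Qed.

Lemma omega_d : w ^+ d = 1.
Proof.
have d_neq0 : (d%:R : R) != 0 by rewrite pnatr_eq0 -lt0n ltnW.
by rewrite omegaX mulrC divfK // mulr_natl cos2pi sin2pi.
Qed.

Lemma omega_neq1 k : (0 < k < d)%N -> w ^+ k != 1.
Proof.
move=> /andP [k_gt0 lt_kd]; rewrite omegaX; apply/eqP => -[cos_1 _].
pose x : R := k%:R * pi / d%:R.
have x_2 : k%:R * (2 * pi / d%:R) = x *+ 2 by rewrite /x mulr2n; ring.
have d_gt0 : 0 < d%:R :> R by rewrite ltr0n ltnW.
have x_gt0 : 0 < x by rewrite /x divr_gt0 // mulr_gt0 ?pi_gt0 // ltr0n.
have x_lt_pi : x < pi by rewrite /x ltr_pdivrMr // mulrC ltr_pM2l ?pi_gt0 // ltr_nat.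
have /sin_gt0_pi : 0 < x < pi by apply/andP.
rewrite lt0r => /andP [/eqP []].
(* cos (2x) = 1 forces cos x ^ 2 = 1, hence sin x = 0 *)
move: cos_1; rewrite x_2 cos_mulr2n mulr2n => cos_1.
by apply/eqP; rewrite -sqrf_eq0 sin2cos2; apply/eqP; lra.
Qed.

Lemma omega_prim : d.-primitive_root w.
Proof.
apply/andP; split; first exact: ltnW.
apply/forallP => i; rewrite unity_rootE; have [->|ne_id] := eqVneq i.+1 d.
  by rewrite omega_d !eqxx.
by rewrite (negbTE (omega_neq1 _)) //= ltn_neqAle ne_id ltn_ord.
Qed.

Lemma omega_conj : w * w^* = 1.
Proof.
apply/eqP; rewrite /omega eq_complex /= mulrN opprK -!expr2 cos2Dsin2 eqxx /=.
by rewrite mulrN mulrC addNr.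
Qed.

Lemma sum_omega_conj a b : (a < d)%N -> (b < d)%N ->
  \sum_(c < d) w ^+ (c * a) * (w ^+ (c * b))^* = (a == b)%:R * d%:R.
Proof.
move=> lt_ad lt_bd; pose u := w ^+ a * (w ^+ b)^*.
have wK k : w ^+ k * (w ^+ k)^* = 1 by rewrite rmorphXn -exprMn omega_conj expr1n.
have -> : \sum_(c < d) w ^+ (c * a) * (w ^+ (c * b))^* = \sum_(c < d) u ^+ c.
  by apply: eq_bigr => c _; rewrite exprMn !(mulnC c) !exprM rmorphXn.
have [eq_ab|ne_ab] := eqVneq a b.
  by rewrite /u eq_ab wK; under eq_bigr do rewrite expr1n; rewrite sumr_const card_ord mul1r.
have u_neq1 : u != 1.
  apply: contra ne_ab => /eqP u1.
  have : u * w ^+ b = w ^+ a by rewrite /u -mulrA [_^* * _]mulrC wK mulr1.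
  by rewrite u1 mul1r => /eqP; rewrite (eq_prim_root_expr omega_prim) !modn_small // eq_sym.
have u_d : u ^+ d = 1.
  by rewrite exprMn -rmorphXn -!exprM !(mulnC _ d) !exprM omega_d !expr1n rmorph1 mulr1.
have := subrX1 u d; rewrite u_d subrr => /esym/eqP.
by rewrite mulf_eq0 subr_eq0 (negbTE u_neq1) mul0r => /eqP.
Qed.

End RootOfUnity.

Section Dephasing.
Variables (R : realType) (d m : nat).
Hypothesis d_gt1 : (1 < d)%N.
Local Notation C := R[i].
Local Notation w := (omega R d).

Lemma adjm_diag n (v : 'rV[C]_n) : adjm (diag_mx v) = diag_mx (map_mx Num.conj v).
Proof. by rewrite /adjm map_diag_mx tr_diag_mx. Qed.

Lemma digit_neq (x y : 'I_(d ^ m)) : x != y -> exists k : 'I_m, digit d x k != digit d y k.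
Proof.
move=> neq_xy; apply/existsP; apply: contraT; rewrite negb_exists => /forallP heq.
case/eqP: neq_xy; apply/val_inj/(@digits_inj d m); rewrite ?ltn_ord ?(ltnW d_gt1) // => l lt_lm.
by apply/eqP; have := heq (Ordinal lt_lm); rewrite negbK.
Qed.

Definition zpauli (beta : {ffun 'I_m -> 'I_d}) : 'M[C]_(d ^ m) :=
  pauli_string R d (fun _ => 0%N) (fun k => beta k).

Definition zphase (beta : {ffun 'I_m -> 'I_d}) (x : nat) : C :=
  \prod_(k < m) w ^+ (beta k * digit d x k).

Lemma zpauliE beta : zpauli beta = diag_mx (\row_x zphase beta x).
Proof.
apply/matrixP => x y; rewrite !mxE.
have digit_mod z k : ((digit d z k + 0) %% d = digit d z k)%N.
  by rewrite addn0 modn_small // digit_lt // ltnW.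
have [<-|neq_xy] := eqVneq x y.
  by rewrite mulr1n; apply: eq_bigr => k _; rewrite digit_mod eqxx mul1r.
have [k neq_k] := digit_neq neq_xy.
by rewrite mulr0n (bigD1 k) //= digit_mod (negbTE neq_k) !mul0r.
Qed.

Lemma sum_zphase_conj x y :
  \sum_(beta : {ffun 'I_m -> 'I_d}) zphase beta x * (zphase beta y)^* =
  \prod_(k < m) ((digit d x k == digit d y k)%:R * d%:R).
Proof.
transitivity (\prod_(k < m) \sum_(c < d) w ^+ (c * digit d x k) * (w ^+ (c * digit d y k))^*).
  rewrite bigA_distr_bigA; apply: eq_bigr => beta _.
  by rewrite /zphase rmorph_prod -big_split.
by apply: eq_bigr => k _; rewrite sum_omega_conj // digit_lt // ltnW.
Qed.

Lemma sum_zpauli_conj (M : 'M[C]_(d ^ m)) :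
  \sum_(beta : {ffun 'I_m -> 'I_d}) zpauli beta *m M *m adjm (zpauli beta) =
  (d ^ m)%:R *: diag_mx (\row_x M x x).
Proof.
apply/matrixP => x y; rewrite summxE !mxE.
under eq_bigr => beta _ do rewrite zpauliE adjm_diag mul_diag_mx mul_mx_diag !mxE mulrAC.
rewrite -mulr_suml sum_zphase_conj.
have [<-|neq_xy] := eqVneq x y.
  by under eq_bigr do rewrite eqxx mul1r; rewrite prodr_const card_ord natrX mulrC.
have [k neq_k] := digit_neq neq_xy.
by rewrite (bigD1 k) //= (negbTE neq_k) !mul0r mulr0.
Qed.

End Dephasing.

Section Projections.
Variable R : realType.
Local Notation C := R[i].

Lemma quad_proj N (x v : 'cV[C]_N) :
  (adjm x *m proj v *m x) 0 0 = (adjm x *m v) 0 0 * ((adjm x *m v) 0 0)^*.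
Proof.
rewrite /proj mulmxA -mulmxA [in LHS]mxE big_ord1; congr (_ * _).
by rewrite -[adjm v *m x]adjmK adjmM adjmK !mxE.
Qed.

Lemma psd_comb N I (r : seq I) (P : pred I) (c : I -> C) (v : I -> 'cV[C]_N) :
  (forall i, 0 <= c i) -> psd (\sum_(i <- r | P i) c i *: proj (v i)).
Proof.
move=> c_ge0; split.
  by rewrite adjm_sum; apply: eq_bigr => i _; rewrite adjmZ adjm_proj geC0_conj.
move=> x; rewrite mulmx_sumr mulmx_suml summxE; apply: sumr_ge0 => i _.
by rewrite -scalemxAr -scalemxAl mxE quad_proj mulr_ge0 // mul_conjC_ge0.
Qed.

Lemma stab_cone_psd d m (s : 'M[C]_(d ^ m)) : stab_cone s -> psd s.
Proof. by move=> [k [w [p [w_ge0 _ ->]]]]; apply: psd_comb => l; rewrite realCE lecR. Qed.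

Lemma proj_state N (v : 'cV[C]_N) : adjm v *m v = 1%:M -> is_state (proj v).
Proof.
move=> v_unit; split; last exact: mxtrace_proj.
have := @psd_comb N _ [:: tt] xpredT (fun _ => 1) (fun _ => v) (fun _ => ler01).
by rewrite big_seq1 scale1r.
Qed.

Lemma proj_comb_state N (I : finType) (P : pred I) (c : I -> C) (v : I -> 'cV[C]_N)
    (u : 'cV[C]_N) :
  adjm u *m u = 1%:M -> (forall i, 0 <= c i) -> (forall i, adjm (v i) *m v i = 1%:M) ->
  exists tau, is_state tau /\
    \sum_(i | P i) c i *: proj (v i) = (\sum_(i | P i) c i) *: tau.
Proof.
move=> u_unit c_ge0 v_unit; set S := \sum_(i | P i) c i.
have [S0|S_neq0] := eqVneq S 0.
  exists (proj u); split; first exact: proj_state.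
  rewrite S0 scale0r big1 // => i Pi.
  by have /psumr_eq0P -> // := S0; rewrite scale0r.
exists (S^-1 *: \sum_(i | P i) c i *: proj (v i)); split; last by rewrite scalerA mulfV ?scale1r.
split.
  rewrite scaler_sumr; under eq_bigr do rewrite scalerA.
  by apply: psd_comb => i; rewrite mulr_ge0 // invr_ge0 sumr_ge0.
rewrite mxtraceZ raddf_sum /=; under eq_bigr do rewrite mxtraceZ mxtrace_proj // mulr1.
exact: mulVf.
Qed.

Lemma supp_proj_self N (v : 'cV[C]_N) : adjm v *m v = 1%:M -> supp_proj (proj v) (proj v).
Proof.
move=> v_unit; have idem : proj v *m proj v = proj v.
  by rewrite /proj mulmxA -(mulmxA v) v_unit mulmx1.
by split; rewrite ?adjm_proj.
Qed.

Lemma supp_proj_eq N (v : 'cV[C]_N) P : adjm v *m v = 1%:M ->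
  supp_proj (proj v) P -> P = proj v.
Proof.
move=> v_unit [P_adj [_ [Pv rkP]]].
have vP : proj v *m P = proj v by rewrite -[in LHS]adjm_proj P_adj -adjmM Pv adjm_proj.
have sub_vP : (proj v <= P)%MS by rewrite -vP submxMl.
have /submxP [D defP] : (P <= proj v)%MS.
  by have := mxrank_leqif_eq sub_vP; rewrite rkP => -[_]; rewrite eqxx => /esym /andP [].
have pv : proj v *m v = v by rewrite /proj -mulmxA v_unit mulmx1.
have := congr1 (mulmx^~ v) Pv; rewrite /= -mulmxA !pv defP -mulmxA pv => Dv.
by rewrite /proj mulmxA Dv.
Qed.

End Projections.

Section Divergences.
Variables (R : realType) (d m : nat).
Local Notation C := R[i].

Lemma ge0_realC (z : C) : 0 <= z -> z = realC (complex.Re z).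
Proof. by move=> z_ge0; apply/eqP; rewrite eq_complex /= eqxx (ger0_Im z_ge0) eqxx. Qed.

Lemma ln2_gt0 : 0 < ln (2 : R).
Proof. by rewrite ln_gt0 // ltr1n. Qed.

Lemma Dmin_le_Dmax psi : adjm psi *m psi = 1%:M ->
  (Dmin_STAB R d m (proj psi) <= Dmax_STAB R d m (proj psi))%E.
Proof.
move=> psi_unit; apply: le_ereal_inf_tmp => _ [s [tau [s_ge0 [[[_ tau_psd] _] [hF ->]]]]].
set sigma := _ *: _ in hF; apply: ge_ereal_inf.
exists (neglog2 (\tr (proj psi *m sigma))).
  by exists (proj psi), sigma; split=> //; exact: supp_proj_self.
set Q := adjm psi *m tau *m psi; set h := complex.Re (Q 0 0).
have Q_ge0 : 0 <= Q 0 0 := tau_psd psi.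
have h_ge0 : 0 <= h by move: Q_ge0; rewrite lecE => /andP [].
have s1_gt0 : 0 < 1 + s by rewrite ltr_pwDl.
have psi_proj : adjm psi *m proj psi *m psi = 1%:M.
  by rewrite /proj !mulmxA psi_unit mul1mx psi_unit.
have -> : \tr (proj psi *m sigma) = realC ((1 + s)^-1 * (1 + s * h)).
  rewrite mxtrace_projMl /sigma -scalemxAr -scalemxAl mulmxDr mulmxDl.
  rewrite -scalemxAr -scalemxAl -/Q psi_proj; clearbody Q.
  rewrite !mxE /= mulr1n (ge0_realC Q_ge0) -/h !realCE.
  by rewrite rmorphM fmorphV !rmorphD rmorphM rmorph1.
have sh_ge0 : 0 <= s * h by rewrite mulr_ge0.
have q_gt0 : 0 < (1 + s)^-1 * (1 + s * h) by rewrite mulr_gt0 ?invr_gt0 //; lra.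
rewrite /neglog2 q_gt0 lee_fin -mulNr ler_pM2r ?invr_gt0 ?ln2_gt0 //.
rewrite lerNl -lnV ?posrE // ler_ln ?posrE ?invr_gt0 //.
by rewrite -{1}(mulr1 (1 + s)^-1) ler_wpM2l ?invr_ge0 ?(ltW s1_gt0) //; lra.
Qed.

Lemma Dmax_le_neglog2 (rho tau : 'M[C]_(d ^ m)) (g : C) :
  0 <= g <= 1 -> is_state tau -> in_FSTAB R d m (g *: rho + (1 - g) *: tau) ->
  (Dmax_STAB R d m rho <= neglog2 g)%E.
Proof.
move=> /andP [g_ge0 g_le1] htau hF; rewrite /neglog2; case: ifPn => [r_gt0|]; last by rewrite leey.
set r := complex.Re g in r_gt0 *; have g_r := ge0_realC g_ge0; rewrite -/r in g_r.
have r_le1 : r <= 1 by move: g_le1; rewrite g_r realCE lecR.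
apply: ge_ereal_inf; exists ((ln (1 + (r^-1 - 1)) / ln 2)%:E); last first.
  by rewrite addrC subrK lnV ?posrE // mulNr.
exists (r^-1 - 1), tau; split; first by rewrite subr_ge0 invf_ge1.
split=> //; split=> //; congr (in_FSTAB _ _ _ _): hF.
rewrite [1 + (_ - 1)]addrC subrK g_r !realCE fmorphV invrK scalerDr scalerA -rmorphM.
by rewrite mulrBr mulfV ?gt_eqF // mulr1 rmorphB rmorph1.
Qed.

End Divergences.

Section Twirl.
Variables (R : realType) (d m : nat) (W : 'M[R[i]]_(d ^ m)).
Hypotheses (d_gt1 : (1 < d)%N) (W_unitary : unitary W).
Hypothesis W_zpauli :
  forall beta : {ffun 'I_m -> 'I_d}, is_clifford R d m (W *m zpauli R beta *m adjm W).
Local Notation C := R[i].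
Let d_gt0 : (0 < d)%N := ltnW d_gt1.

Definition wket (x : 'I_(d ^ m)) : 'cV[C]_(d ^ m) := W *m delta_mx x 0.

Definition twirl_coef (sigma : 'M[C]_(d ^ m)) x : C := (adjm (wket x) *m sigma *m wket x) 0 0.

Definition twirl (sigma : 'M[C]_(d ^ m)) : 'M[C]_(d ^ m) :=
  \sum_x twirl_coef sigma x *: proj (wket x).

Lemma wket_unit x : adjm (wket x) *m wket x = 1%:M.
Proof. exact: unitary_unit_vec (delta_unit_vec _ _). Qed.

Lemma twirl_coefE sigma x : twirl_coef sigma x = (adjm W *m sigma *m W) x x.
Proof.
rewrite /twirl_coef /wket adjmM adjm_delta; set ex : 'cV[C]_(d ^ m) := delta_mx x 0.
have -> : (delta_mx 0 x : 'rV[C]_(d ^ m)) *m adjm W *m sigma *m (W *m ex) =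
          delta_mx 0 x *m (adjm W *m sigma *m W) *m ex.
  by rewrite !mulmxA.
by rewrite -rowE -colE !mxE.
Qed.

Lemma twirl_coef_ge0 sigma x : psd sigma -> 0 <= twirl_coef sigma x.
Proof. by case=> _; apply. Qed.

Lemma sum_twirl_coef sigma : \sum_x twirl_coef sigma x = \tr sigma.
Proof.
under eq_bigr do rewrite twirl_coefE.
by rewrite -[LHS]/(\tr _) mxtrace_mulC mulmxA W_unitary mul1mx.
Qed.

Lemma mxtrace_twirl sigma : \tr (twirl sigma) = \tr sigma.
Proof.
rewrite raddf_sum /= -sum_twirl_coef; apply: eq_bigr => x _.
by rewrite mxtraceZ mxtrace_proj ?wket_unit ?mulr1.
Qed.

Lemma twirlE sigma :
  twirl sigma = realC ((d ^ m)%:R^-1) *: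
    \sum_(beta : {ffun 'I_m -> 'I_d})
      (W *m zpauli R beta *m adjm W) *m sigma *m adjm (W *m zpauli R beta *m adjm W).
Proof.
have conjE beta : (W *m zpauli R beta *m adjm W) *m sigma *m adjm (W *m zpauli R beta *m adjm W)
    = W *m (zpauli R beta *m (adjm W *m sigma *m W) *m adjm (zpauli R beta)) *m adjm W.
  by rewrite !adjmM adjmK !mulmxA.
under eq_bigr do rewrite conjE.
rewrite -mulmx_suml -mulmx_sumr sum_zpauli_conj // -scalemxAr -scalemxAl scalerA.
have d_m_neq0 : (d ^ m)%:R != 0 :> C by rewrite pnatr_eq0 -lt0n expn_gt0 ltnW.
rewrite realCE fmorphV rmorph_nat mulVf // scale1r diag_mx_sum_delta mulmx_sumr mulmx_suml.
apply: eq_bigr => x _; rewrite mxE -twirl_coefE -scalemxAr -scalemxAl; congr (_ *: _).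
rewrite -(mul_delta_mx (0 : 'I_1)) -[delta_mx 0 x]adjm_delta.
by rewrite -[delta_mx x 0 *m _]/(proj _) proj_conj.
Qed.

Lemma twirl_FSTAB sigma : in_FSTAB R d m sigma -> in_FSTAB R d m (twirl sigma).
Proof.
move=> hF; apply: (stab_cone_FSTAB d_gt0); last by rewrite mxtrace_twirl (mxtrace_FSTAB d_gt0 hF).
rewrite twirlE; apply: stab_coneZ; first by rewrite invr_ge0.
apply: stab_cone_sum => beta; apply: stab_cone_conj; first exact: W_zpauli.
exact: FSTAB_cone hF.
Qed.

Lemma twirl_coef_le1 sigma x : in_FSTAB R d m sigma -> twirl_coef sigma x <= 1.
Proof.
move=> hF; have c_ge0 y := twirl_coef_ge0 y (stab_cone_psd (FSTAB_cone hF)).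
rewrite -(mxtrace_FSTAB d_gt0 hF) -sum_twirl_coef (bigD1 x) //= lerDl.
by apply: sumr_ge0 => y _.
Qed.

Lemma twirl_split sigma x : in_FSTAB R d m sigma ->
  exists tau, is_state tau /\
    twirl sigma = twirl_coef sigma x *: proj (wket x) + (1 - twirl_coef sigma x) *: tau.
Proof.
move=> hF; have c_ge0 y := twirl_coef_ge0 y (stab_cone_psd (FSTAB_cone hF)).
have [tau [htau rest]] := proj_comb_state (fun y => y != x) (wket_unit x) c_ge0 wket_unit.
exists tau; split=> //; rewrite /twirl (bigD1 x) //= rest; congr (_ + _ *: _).
by rewrite -(mxtrace_FSTAB d_gt0 hF) -sum_twirl_coef [in RHS](bigD1 x) //= addrAC subrr add0r.
Qed.

Lemma Dmax_le_Dmin x :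
  (Dmax_STAB R d m (proj (wket x)) <= Dmin_STAB R d m (proj (wket x)))%E.
Proof.
apply: le_ereal_inf_tmp => _ [P [sigma [hP [hF ->]]]].
rewrite (supp_proj_eq (wket_unit x) hP) mxtrace_projMl -/(twirl_coef sigma x).
have [tau [htau split_sigma]] := twirl_split x hF.
apply: Dmax_le_neglog2 htau _; last by rewrite -split_sigma; exact: twirl_FSTAB.
by rewrite twirl_coef_le1 ?twirl_coef_ge0 //; exact/stab_cone_psd/FSTAB_cone.
Qed.

Lemma Dmin_eq_Dmax_wket x :
  Dmin_STAB R d m (proj (wket x)) = Dmax_STAB R d m (proj (wket x)).
Proof. by apply/le_anti; rewrite Dmin_le_Dmax ?wket_unit ?Dmax_le_Dmin. Qed.

End Twirl.

Section TensorPower.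
Variables (R : realType) (d t n : nat).
Hypotheses (d_gt1 : (1 < d)%N) (t_gt0 : (0 < t)%N).
Local Notation C := R[i].
Let d_gt0 : (0 < d)%N := ltnW d_gt1.

Lemma tpow_vec_tensor (U : 'M[C]_(d ^ t)) :
  tpow_vec R d t n (U *m ket0 R d t) = tensor d_gt0 n (fun _ => U) *m ket0 R d (t * n).
Proof.
apply/matrixP => x j; rewrite ord1 [LHS]mxE (mulmx_ket0 _ _ (expd_gt0 d_gt0 _)) mxE.
apply: eq_bigr => l _; rewrite -[(_ %% _)%N]/(val (@block d t d_gt0 x l)) /vget valK.
rewrite (mulmx_ket0 _ _ (expd_gt0 d_gt0 _)); congr (U _ _); apply: val_inj.
by rewrite /= /digit div0n mod0n.
Qed.

Lemma tensor_zpauli_clifford (V C0 : 'M[C]_(d ^ t)) :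
  third_level R d t V -> is_clifford R d t C0 ->
  forall beta : {ffun 'I_(t * n) -> 'I_d},
    is_clifford R d (t * n) (tensor d_gt0 n (fun _ => V *m C0) *m zpauli R beta *m
                             adjm (tensor d_gt0 n (fun _ => V *m C0))).
Proof.
move=> hV hC0 beta; rewrite /zpauli (@pauli_string_tensor R d t d_gt0 t_gt0).
rewrite adjm_tensor !tensor_mul.
apply: tensor_clifford => // l; set P := pauli_string R d _ _.
have -> : V *m C0 *m P *m adjm (V *m C0) = V *m (C0 *m P *m adjm C0) *m adjm V.
  by rewrite adjmM !mulmxA.
by apply/hV.2/hC0.2; exists 1; do 2 eexists; rewrite normr1 scale1r.
Qed.

End TensorPower.

Theorem proposition5 (R : realType) (d t : nat) :
  ((d == 2)%N || (prime d && odd d)) -> (1 <= t)%N ->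
  forall (V : 'M[R[i]]_(d ^ t)) (phi : 'cV[R[i]]_(d ^ t)),
    third_level R d t V -> is_stab_state R d t phi ->
    forall n : nat, (1 <= n)%N ->
      Dmin_STAB R d (t * n) (proj (tpow_vec R d t n (V *m phi))) =
      Dmax_STAB R d (t * n) (proj (tpow_vec R d t n (V *m phi))).
Proof.
move=> hd t_gt0 V phi hV [C0 [hC0 ->]] n _.
have d_gt1 : (1 < d)%N by case/orP: hd => [/eqP -> // | /andP [/prime_gt1]].
rewrite mulmxA (tpow_vec_tensor _ d_gt1) (ket0_delta R (expd_gt0 (ltnW d_gt1) _)).
have U_unitary : unitary (tensor (ltnW d_gt1) n (fun=> V *m C0)).
  by apply: tensor_unitary => l; exact: unitaryM hV.1 hC0.1.
exact: Dmin_eq_Dmax_wket d_gt1 U_unitary (tensor_zpauli_clifford d_gt1 t_gt0 hV hC0) _.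
Qed.
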